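(* Let $S$ be a finite monoid. Then every almost pure $S$-act is absolutely pure.
   Context: Let $S$ be a monoid. A (right) $S$-act is a set $A$ with a map $A\times S\to A$, $(a,s)\mapsto as$, such that $a1=a$ and $a(st)=(as)t$. Given an $S$-act $A$ and a set $X$ of variables, an equation over $A$ is an expression of one of the forms $xs=yt$, $xs=xt$ or $xs=a$ with $x,y\in X$, $s,t\in S$, $a\in A$. If $A$ is a subact of $B$, a solution in $B$ of a set $\Sigma$ of such equations is a family $(b_x)_{x\in X}$ in $B$ with $b_xs=b_yt$ for each $xs=yt\in\Sigma$ and $b_xs=a$ for each $xs=a\in\Sigma$. $\Sigma$ is consistent if it has a solution in some $S$-act containing $A$ as a subact. $A$ is almost pure if every finite consistent set of equations over $A$ in one variable has a solution in $A$, and absolutely pure if every finite consistent set of equations over $A$ (in finitely many variables) has a solution in $A$. *)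

From Stdlib Require Import List.
From mathcomp Require Import all_boot.
Set Implicit Arguments. Unset Strict Implicit. Unset Printing Implicit Defensive.

Definition is_monoid (S : Type) (mul : S -> S -> S) (one : S) : Prop :=
  (forall s t u, mul s (mul t u) = mul (mul s t) u) /\
  (forall s, mul one s = s) /\ (forall s, mul s one = s).

Definition is_act (S : Type) (mul : S -> S -> S) (one : S)
  (A : Type) (act : A -> S -> A) : Prop :=
  (forall a, act a one = a) /\ (forall a s t, act a (mul s t) = act (act a s) t).

(* Equations over A in the variables X: x s = y t (which covers x s = x t
   when y = x) and x s = a. *)
Inductive equation (S A X : Type) : Type :=
  | EqVV : X -> S -> X -> S -> equation S A X
  | EqVC : X -> S -> A -> equation S A X.

Definition solves (S A X B : Type) (actB : B -> S -> B) (i : A -> B)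
  (b : X -> B) (e : equation S A X) : Prop :=
  match e with
  | EqVV x s y t => actB (b x) s = actB (b y) t
  | EqVC x s a => actB (b x) s = i a
  end.

Definition solvable_in (S A X B : Type) (actB : B -> S -> B) (i : A -> B)
  (E : seq (equation S A X)) : Prop :=
  exists b : X -> B, forall e, List.In e E -> solves actB i b e.

Definition consistent (S : Type) (mul : S -> S -> S) (one : S)
  (A : Type) (act : A -> S -> A) (X : Type) (E : seq (equation S A X)) : Prop :=
  exists (B : Type) (actB : B -> S -> B) (i : A -> B),
    is_act mul one actB /\ injective i /\
    (forall a s, i (act a s) = actB (i a) s) /\
    solvable_in actB i E.

Definition almost_pure (S : Type) (mul : S -> S -> S) (one : S)
  (A : Type) (act : A -> S -> A) : Prop :=
  forall E : seq (equation S A unit),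
    consistent mul one act E -> solvable_in act id E.

Definition absolutely_pure (S : Type) (mul : S -> S -> S) (one : S)
  (A : Type) (act : A -> S -> A) : Prop :=
  forall (n : nat) (E : seq (equation S A 'I_n)),
    consistent mul one act E -> solvable_in act id E.

From Stdlib Require Import List ClassicalEpsilon ProofIrrelevance.
From mathcomp Require Import all_boot.

Set Implicit Arguments. Unset Strict Implicit. Unset Printing Implicit Defensive.

(* Let b_1, ..., b_n be a solution, in an extension B of A, of a finite
   consistent system.  Since S is finite, all one-variable equations over A
   satisfied by b_1 form a finite consistent system, so almost purity yields
   a_1 in A satisfying all of them.  Then b_1 S u A is a subact of B retracting
   onto A via b_1 s |-> a_1 s, and pushing B out along this retraction gives an
   extension of A in which b_1 has landed in A.  Repeating this for b_2, ...,
   b_n turns the solution into one whose values all lie in A. *)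

Definition act_hom (S B Q : Type) (actB : B -> S -> B) (actQ : Q -> S -> Q)
  (f : B -> Q) : Prop :=
  forall b s, f (actB b s) = actQ (f b) s.

Definition preimage (X Y : Type) (f : X -> Y) (y : Y) : option X :=
  match excluded_middle_informative (exists x, y = f x) with
  | left h => Some (proj1_sig (constructive_indefinite_description _ h))
  | right _ => None
  end.

Variant preimage_spec (X Y : Type) (f : X -> Y) (y : Y) : option X -> Prop :=
  | PreimageSome x of y = f x : preimage_spec f y (Some x)
  | PreimageNone of (forall x, y <> f x) : preimage_spec f y None.

Lemma preimageP (X Y : Type) (f : X -> Y) (y : Y) :
  preimage_spec f y (preimage f y).
Proof.
rewrite /preimage; case: excluded_middle_informative => [h|h].
  by case: constructive_indefinite_description => x /= ->; constructor.
by constructor=> x yfx; apply: h; exists x.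
Qed.

Lemma preimage_inj (X Y : Type) (f : X -> Y) (x : X) :
  injective f -> preimage f (f x) = Some x.
Proof. by move=> f_inj; case: preimageP => [x' /f_inj <-|/(_ x)]. Qed.

Lemma In_enum (T : finType) (x : T) : List.In x (enum T).
Proof.
have : x \in enum T by rewrite mem_enum.
elim: (enum T) => [|y l IH] //=; rewrite in_cons => /orP [/eqP ->|/IH]; auto.
Qed.

Lemma exists_sublist (T : Type) (P : T -> Prop) (l : seq T) :
  exists l', forall x, List.In x l' <-> List.In x l /\ P x.
Proof.
elim: l => [|y l [l' Hl']]; first by exists [::] => x; split=> [|[]].
have [Py|nPy] := classic (P y).
  exists (y :: l') => x /=; rewrite Hl'.
  by split=> [[<-|[]]|[[<-|]]]; auto.
exists l' => x /=; rewrite Hl'.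
by split=> [[]|[[<-|]]]; auto.
Qed.

Section Extensions.

Variables (S : Type) (mul : S -> S -> S) (one : S) (A : Type) (act : A -> S -> A).

Definition extension (B : Type) (actB : B -> S -> B) (i : A -> B) : Prop :=
  is_act mul one actB /\ injective i /\ act_hom act actB i.

Definition ext_morph (B Q : Type) (actB : B -> S -> B) (i : A -> B)
  (actQ : Q -> S -> Q) (j : A -> Q) (f : B -> Q) : Prop :=
  act_hom actB actQ f /\ forall a, f (i a) = j a.

Lemma ext_morph_comp (B Q R : Type) (actB : B -> S -> B) (actQ : Q -> S -> Q)
  (actR : R -> S -> R) (i : A -> B) (j : A -> Q) (k : A -> R)
  (f : B -> Q) (g : Q -> R) :
  ext_morph actB i actQ j f -> ext_morph actQ j actR k g ->
  ext_morph actB i actR k (g \o f).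
Proof.
move=> [f_hom fij] [g_hom gjk]; split=> [b s|a] /=; first by rewrite f_hom g_hom.
by rewrite fij gjk.
Qed.

Lemma solves_ext_morph (B Q X : Type) (actB : B -> S -> B) (i : A -> B)
  (actQ : Q -> S -> Q) (j : A -> Q) (f : B -> Q) (b : X -> B)
  (e : equation S A X) :
  ext_morph actB i actQ j f -> solves actB i b e -> solves actQ j (f \o b) e.
Proof. by move=> [f_hom fij]; case: e => [x s y t|x s a] /= H; rewrite -!f_hom H. Qed.

Lemma solves_reflect (Q X : Type) (actQ : Q -> S -> Q) (j : A -> Q)
  (c : X -> Q) (a : X -> A) (e : equation S A X) :
  injective j -> act_hom act actQ j -> (forall x, c x = j (a x)) ->
  solves actQ j c e -> solves act id a e.
Proof.
move=> j_inj j_hom ca; case: e => [x s y t|x s a'] /=; rewrite !ca -!j_hom => H.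
  exact: j_inj.
exact: j_inj.
Qed.

Definition realizes_diagrams : Prop :=
  forall (B : Type) (actB : B -> S -> B) (i : A -> B), extension actB i ->
  forall b0 : B, exists a0 : A, forall e : equation S A unit,
    solves actB i (fun=> b0) e -> solves act id (fun=> a0) e.

Hypothesis HA : is_act mul one act.

Section Pushout.

Variables (B : Type) (actB : B -> S -> B) (C : B -> Prop) (r : B -> A).
Hypothesis HB : is_act mul one actB.
Hypothesis C_closed : forall b s, C b -> C (actB b s).
Hypothesis r_hom : forall b s, C b -> r (actB b s) = act (r b) s.

(* The pushout of A <-r- C -> B: A glued to the part of B outside C. *)
Definition pushout : Type := (A + {b : B | ~ C b})%type.

Definition pushout_in (b : B) : pushout :=
  match excluded_middle_informative (C b) with
  | left _ => inl (r b)
  | right nCb => inr (exist _ b nCb)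
  end.

Definition pushout_act (p : pushout) (s : S) : pushout :=
  match p with
  | inl a => inl (act a s)
  | inr b => pushout_in (actB (sval b) s)
  end.

Lemma pushout_in_C b : C b -> pushout_in b = inl (r b).
Proof. by rewrite /pushout_in; case: excluded_middle_informative. Qed.

Lemma pushout_in_hom : act_hom actB pushout_act pushout_in.
Proof.
move=> b s; rewrite {2}/pushout_in; case: excluded_middle_informative => //= Cb.
by rewrite !pushout_in_C ?r_hom //; exact: C_closed.
Qed.

Lemma pushout_extension : extension pushout_act inl.
Proof.
have [act1 actM] := HA; have [actB1 actBM] := HB.
split; last by split=> [a a' []|].
split=> [[a|[b nCb]]|[a|[b nCb]] s t] /=; first by rewrite act1.
- rewrite actB1 /pushout_in; case: excluded_middle_informative => // nCb'.
  by rewrite (proof_irrelevance _ nCb nCb').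
- by rewrite actM.
- by rewrite actBM pushout_in_hom.
Qed.

End Pushout.

Section OrbitRetraction.

Variables (B : Type) (actB : B -> S -> B) (i : A -> B) (b0 : B) (a0 : A).
Hypothesis Hext : extension actB i.
Hypothesis Ha0 : forall e : equation S A unit,
  solves actB i (fun=> b0) e -> solves act id (fun=> a0) e.

Definition in_span (b : B) : Prop := (exists a, b = i a) \/ (exists s, b = actB b0 s).

(* Off the span the value is irrelevant; [one] is only a default. *)
Definition orbit_retract (b : B) : A :=
  if preimage i b is Some a then a
  else act a0 (odflt one (preimage (actB b0) b)).

Lemma orbit_retract_i a : orbit_retract (i a) = a.
Proof. by have [_ [i_inj _]] := Hext; rewrite /orbit_retract preimage_inj. Qed.

Lemma orbit_retract_orbit s : orbit_retract (actB b0 s) = act a0 s.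
Proof.
rewrite /orbit_retract; case: preimageP => [a b0s|_].
  by symmetry; exact: (@Ha0 (EqVC tt s a) b0s).
case: preimageP => [s' b0s|/(_ s)//] /=.
by symmetry; exact: (@Ha0 (EqVV A tt s tt s') b0s).
Qed.

Lemma in_span_closed b s : in_span b -> in_span (actB b s).
Proof.
have [[_ actBM] [_ i_hom]] := Hext.
case=> [[a ->]|[s' ->]]; first by left; exists (act a s).
by right; exists (mul s' s).
Qed.

Lemma orbit_retract_hom b s :
  in_span b -> orbit_retract (actB b s) = act (orbit_retract b) s.
Proof.
have [[_ actBM] [_ i_hom]] := Hext; have [_ actM] := HA.
case=> [[a ->]|[s' ->]]; first by rewrite -i_hom !orbit_retract_i.
by rewrite -actBM !orbit_retract_orbit actM.
Qed.

End OrbitRetraction.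

Hypothesis Hreal : realizes_diagrams.

Lemma absorb_element (B : Type) (actB : B -> S -> B) (i : A -> B) (b0 : B) :
  extension actB i ->
  exists (Q : Type) (actQ : Q -> S -> Q) (j : A -> Q) (f : B -> Q),
    extension actQ j /\ ext_morph actB i actQ j f /\ exists a, f b0 = j a.
Proof.
move=> Hext; have [a0 Ha0] := Hreal Hext b0.
pose C := in_span actB i b0; pose r := orbit_retract actB i b0 a0.
have C_i a : C (i a) by left; exists a.
have C_b0 : C b0 by right; exists one; have [[->]] := Hext.
have [HB _] := Hext.
have C_closed := @in_span_closed _ _ _ b0 Hext.
have r_hom := orbit_retract_hom Hext Ha0.
exists (pushout C), (pushout_act actB (C:=C) r), inl, (pushout_in C r).
split; first exact: pushout_extension.
split; first split.
- exact: pushout_in_hom.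
- by move=> a; rewrite pushout_in_C // /r orbit_retract_i.
- by exists (r b0); rewrite pushout_in_C.
Qed.

Lemma absorb_family (T : Type) (l : seq T) (B : Type) (actB : B -> S -> B)
  (i : A -> B) (b : T -> B) :
  extension actB i ->
  exists (Q : Type) (actQ : Q -> S -> Q) (j : A -> Q) (f : B -> Q),
    extension actQ j /\ ext_morph actB i actQ j f /\
    forall x, List.In x l -> exists a, f (b x) = j a.
Proof.
elim: l B actB i b => [|y l IH] B actB i b Hext.
  by exists B, actB, i, id.
have [Q1 [actQ1 [j1 [f1 [Hext1 [Hf1 [a1 f1y]]]]]]] := absorb_element (b y) Hext.
have [Q [actQ [j [f [HextQ [Hf Hl]]]]]] := IH _ _ _ (f1 \o b) Hext1.
exists Q, actQ, j, (f \o f1); split=> //; split; first exact: ext_morph_comp Hf1 Hf.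
move=> x /= [<-|/Hl //]; exists a1; rewrite f1y; exact: Hf.2.
Qed.

Lemma realizes_diagrams_absolutely_pure : absolutely_pure mul one act.
Proof.
move=> n E [B [actB [i [HB [i_inj [i_hom [b Hb]]]]]]].
have [Q [actQ [j [f [[_ [j_inj j_hom]] [Hf Hl]]]]]] :=
  absorb_family (enum 'I_n) b (conj HB (conj i_inj i_hom)).
have [a fba] := fin_all_exists (fun x => Hl x (In_enum x)).
exists a => e /Hb /(solves_ext_morph Hf); exact: solves_reflect.
Qed.

End Extensions.

Lemma finite_diagram (S : finType) (A B : Type) (actB : B -> S -> B)
  (i : A -> B) (b0 : B) :
  injective i ->
  exists E : seq (equation S A unit),
    forall e, List.In e E <-> solves actB i (fun=> b0) e.
Proof.
move=> i_inj.
(* By injectivity of i, for each s at most one a satisfies b0 s = i a. *)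
pose candidates : seq (equation S A unit) :=
  flat_map (fun s => map (EqVV A tt s tt) (enum S) ++
                     map (EqVC tt s) (seq_of_opt (preimage i (actB b0 s)))) (enum S).
have [E HE] := exists_sublist (solves actB i (fun=> b0)) candidates.
exists E => e; rewrite HE; split=> [[] //|solved_e]; split=> //.
apply/in_flat_map; case: e solved_e => [[] s [] t|[] s a] /= b0s.
  by exists s; split; [|apply: in_or_app; left; apply: in_map]; exact: In_enum.
exists s; split; first exact: In_enum.
by apply: in_or_app; right; rewrite b0s preimage_inj //=; left.
Qed.

Lemma almost_pure_realizes_diagrams (S : finType) (mul : S -> S -> S) (one : S)
  (A : Type) (act : A -> S -> A) :
  almost_pure mul one act -> realizes_diagrams mul one act.
Proof.
move=> Hap B actB i Hext b0; have [HB [i_inj i_hom]] := Hext.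
have [E HE] := finite_diagram actB b0 i_inj.
have [|a Ha] := Hap E.
  by exists B, actB, i; do 3 split=> //; exists (fun=> b0) => e /HE.
exists (a tt) => e /HE /Ha.
by case: e => [[] s [] t|[] s a'].
Qed.

Theorem mainTheorem2 (S : finType) (mul : S -> S -> S) (one : S)
  (HS : is_monoid mul one) (A : Type) (act : A -> S -> A)
  (HA : is_act mul one act) :
  almost_pure mul one act -> absolutely_pure mul one act.
Proof.
move=> Hap; exact: realizes_diagrams_absolutely_pure HA (almost_pure_realizes_diagrams Hap).
Qed.
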